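(* Let $E$ and $F$ be Banach lattices such that $E$ is positively isomorphic to a subspace of $F$, i.e. there is a positive linear operator $T\colon E\to F$ that is a topological isomorphism onto its range. If $F$ has the positive Schur property, then $E$ has the positive Schur property.
   Context: A Banach lattice $E$ has the positive Schur property (PSP) if every weakly null sequence of positive elements of $E$ (i.e. elements of $E^+=\{x\in E: x\ge 0\}$) is norm null. A linear operator between Banach lattices is positive if it maps positive elements to positive elements. *)

From HB Require Import structures.
From mathcomp Require Import all_boot all_order all_algebra.
From mathcomp Require Import all_classical all_reals all_analysis.
Set Implicit Arguments. Unset Strict Implicit. Unset Printing Implicit Defensive.
Import Order.TTheory GRing.Theory Num.Theory.
Import numFieldNormedType.Exports.
Local Open Scope classical_set_scope.
Local Open Scope ring_scope.

Definition is_sup {T : Type} (le : T -> T -> Prop) (s x y : T) : Prop :=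
  [/\ le x s, le y s & forall u, le x u -> le y u -> le s u].

Definition is_banach_lattice (R : realType) (V : completeNormedModType R)
  (le : V -> V -> Prop) : Prop :=
  (forall x, le x x) /\
  (forall x y, le x y -> le y x -> x = y) /\
  (forall x y z, le x y -> le y z -> le x z) /\
  (forall x y z, le x y -> le (x + z) (y + z)) /\
  (forall (a : R) x y, 0 <= a -> le x y -> le (a *: x) (a *: y)) /\
  (forall x y, exists s, is_sup le s x y) /\
    (* lattice norm: |x| <= |y| implies ||x|| <= ||y||, where |x| = x \/ -x *)
      (forall x y ax ay, is_sup le ax x (- x) -> is_sup le ay y (- y) ->
         le ax ay -> `|x| <= `|y|).

Definition weakly_null (R : realType) (V : completeNormedModType R)
  (x : nat -> V) : Prop :=
  forall f : {linear V -> R^o}, continuous f ->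
    (fun n => f (x n)) @ \oo --> (0 : R^o).

Definition positive_Schur (R : realType) (V : completeNormedModType R)
  (le : V -> V -> Prop) : Prop :=
  forall x : nat -> V, (forall n, le 0 (x n)) -> weakly_null x ->
    (fun n => `|x n|) @ \oo --> (0 : R).

(* T maps a positive weakly null sequence of E to a positive sequence of F
   that is weakly null, because continuous functionals on F pull back along T
   to continuous functionals on E.  By the positive Schur property of F it is
   norm null, and since the inverse of T is continuous on the range of T, so
   is the original sequence. *)
From HB Require Import structures.
From mathcomp Require Import all_boot all_order all_algebra.
From mathcomp Require Import all_classical all_reals all_analysis.
Set Implicit Arguments. Unset Strict Implicit. Unset Printing Implicit Defensive.
Import Order.TTheory GRing.Theory Num.Theory.
Import numFieldNormedType.Exports.
Local Open Scope classical_set_scope.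
Local Open Scope ring_scope.

Lemma weakly_null_comp (R : realType) (V W : completeNormedModType R)
    (T : {linear V -> W}) (x : nat -> V) :
  continuous T -> weakly_null x -> weakly_null (T \o x).
Proof.
move=> Tcont xw f fc.
exact: (xw (f \o T) (fun y => continuous_comp (Tcont y) (fc (T y)))).
Qed.

Lemma cvg_cancel_within_range (U V : topologicalType) (J : Type)
    (D : set_system J) (f : U -> V) (g : V -> U) (x : J -> U) (a : U) :
    Filter D -> cancel f g -> {within range f, continuous g} ->
  f \o x @ D --> f a -> x @ D --> a.
Proof.
move=> DF fK gc fxa.
have xE : x = g \o (f \o x) by apply: funext => i /=; rewrite fK.
have := (subspace_continuousP _ g).1 gc (f a) (ex_intro2 _ _ a I erefl).
rewrite fK => ga.
have fx_range : f \o x @ D --> within (range f) (nbhs (f a)).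
  move=> B /= /fxa; apply: (@filterS _ D) => i /= Bi.
  by apply: Bi; exists (x i).
by rewrite xE; apply: cvg_comp fx_range ga.
Qed.

Theorem lemma1p2 (R : realType)
  (E : completeNormedModType R) (leE : E -> E -> Prop)
  (F : completeNormedModType R) (leF : F -> F -> Prop)
  (hE : is_banach_lattice leE) (hF : is_banach_lattice leF)
  (T : {linear E -> F})
  (Tpos : forall x, leE 0 x -> leF 0 (T x))
  (Tcont : continuous T)
  (Tinj : injective T)
  (Tinv : exists g : F -> E, cancel T g /\ {within range T, continuous g}) :
  positive_Schur leF -> positive_Schur leE.
Proof.
move=> PF x xpos xw.
have /norm_cvg0 Tx0 := PF _ (fun n => Tpos _ (xpos n)) (weakly_null_comp Tcont xw).
apply/norm_cvg0P; case: Tinv => g [TK gc].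
apply: (cvg_cancel_within_range (a := 0) _ TK gc).
by rewrite raddf0.
Qed.
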